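(* Let $\varphi(s,v)=\vec c(s)+v\vec q(s)$ be a developable timelike ruled surface of type $M^1_+$ in $\mathbb{R}^3_1$ and let the spacelike ruled surface $\varphi^*(s,v)=\vec c(s)+R\vec a(s)+v\vec q^*(s)$ of type $M^2_+$ be a Mannheim offset of $\varphi$, with $\theta$ the angle between $\vec q$ and $\vec q^*$. Let $\varphi_{h^*}$ and $\varphi_{a^*}$ be the trajectory ruled surfaces generated by $\vec h^*$ and $\vec a^*$. Then (a) $\varphi_{h^*}$ is nondevelopable; (b) $\varphi_{a^*}$ is developable if and only if $\cos\theta+R\frac{ds_1}{ds}\kappa\sin\theta=0$.
   Context: Work in Minkowski 3-space $\mathbb{R}^3_1$ with $\langle x,y\rangle=-x_1y_1+x_2y_2+x_3y_3$, $\|x\|=\sqrt{|\langle x,x\rangle|}$, and Lorentzian cross product $x\times y=(x_2y_3-x_3y_2,\,x_1y_3-x_3y_1,\,x_2y_1-x_1y_2)$. A ruled surface is $\varphi(s,v)=\vec c(s)+v\vec q(s)$ with $\vec q$ a unit non-null vector field, $d\vec q/ds$ non-null, $\vec c$ the striction curve ($\langle d\vec q/ds,d\vec c/ds\rangle=0$) and $s$ the arc length of $\vec c$. Its Frenet frame $\{\vec q,\vec h,\vec a\}$ has central normal $\vec h=\frac{d\vec q/ds}{\|d\vec q/ds\|}$ and asymptotic normal $\vec a=\frac{(d\vec q/ds)\times\vec q}{\|d\vec q/ds\|}$. Type $M^1_+$: $\vec q$ and $\vec h$ spacelike (a timelike surface); type $M^2_+$: $\vec h$ timelike, $\vec q$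 and $d\vec q/ds$ spacelike (a spacelike surface). Let $s_1$ be the arc length of the spherical image of $\vec q$ and $\kappa$ the conical curvature of the directing cone; for type $M^1_+$: $d\vec q/ds_1=\vec h$, $d\vec h/ds_1=-\vec q+\kappa\vec a$, $d\vec a/ds_1=\kappa\vec h$. A ruled surface $\psi(s,v)=\vec b(s)+v\vec e(s)$ has distribution parameter $\det(d\vec b/ds,\vec e,d\vec e/ds)/\langle d\vec e/ds,d\vec e/ds\rangle$ and is developable iff it vanishes identically. A ruled surface $\varphi^*(s,v)=\vec c^*(s)+v\vec q^*(s)$ with Frenet frame $\{\vec q^*,\vec h^*,\vec a^*\}$ is a Mannheim offset of $\varphi$ if its rulings correspond one-to-one with those of $\varphi$ and $\vec h^*=\vec a$; then $\vec c^*=\vec c+R\vec a$ with $R$ constant since $\varphi$ is developable, and with $\theta$ the angle between $\vec q$ and $\vec q^*$, $\vec q^*=\cos\theta\,\vec q+\sin\theta\,\vec h$, $\vec a^*=\sin\theta\,\vec q-\cos\theta\,\vec h$. The trajectory ruled surfaces are $\varphi_{h^*}(s,v)=\vec c^*(s)+v\vec h^*(s)$ and $\varphi_{a^*}(s,v)=\vec c^*(s)+v\vec a^*(s)$. *)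

From Stdlib Require Import Reals.
From Coquelicot Require Import Coquelicot.
Open Scope R_scope.

Record vec := mkv { x1 : R; x2 : R; x3 : R }.

Definition vadd (x y : vec) : vec := mkv (x1 x + x1 y) (x2 x + x2 y) (x3 x + x3 y).
Definition vscal (k : R) (x : vec) : vec := mkv (k * x1 x) (k * x2 x) (k * x3 x).

Definition lor (x y : vec) : R := - x1 x * x1 y + x2 x * x2 y + x3 x * x3 y.
Definition lnorm (x : vec) : R := sqrt (Rabs (lor x x)).
Definition lcross (x y : vec) : vec :=
  mkv (x2 x * x3 y - x3 x * x2 y)
      (x1 x * x3 y - x3 x * x1 y)
      (x2 x * x1 y - x1 x * x2 y).
Definition det3 (x y z : vec) : R :=
  x1 x * (x2 y * x3 z - x3 y * x2 z)
  - x2 x * (x1 y * x3 z - x3 y * x1 z)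
  + x3 x * (x1 y * x2 z - x2 y * x1 z).

Definition spacelike (x : vec) : Prop := 0 < lor x x.
Definition timelike (x : vec) : Prop := lor x x < 0.
Definition nonnull (x : vec) : Prop := lor x x <> 0.

Definition vD (f : R -> vec) (s : R) : vec :=
  mkv (Derive (fun t => x1 (f t)) s)
      (Derive (fun t => x2 (f t)) s)
      (Derive (fun t => x3 (f t)) s).
Definition vdiff_at (f : R -> vec) (s : R) : Prop :=
  ex_derive (fun t => x1 (f t)) s /\ ex_derive (fun t => x2 (f t)) s /\
  ex_derive (fun t => x3 (f t)) s.

Definition in_I (lo hi : Rbar) (s : R) : Prop := Rbar_lt lo s /\ Rbar_lt s hi.

Definition C2_on (lo hi : Rbar) (f : R -> vec) : Prop :=
  forall s, in_I lo hi s -> vdiff_at f s /\ vdiff_at (vD f) s.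

(** Distribution parameter of psi(s,v) = b(s) + v e(s). *)
Definition dist_param (b e : R -> vec) (s : R) : R :=
  det3 (vD b s) (e s) (vD e s) / lor (vD e s) (vD e s).
Definition developable_on (lo hi : Rbar) (b e : R -> vec) : Prop :=
  forall s, in_I lo hi s -> dist_param b e s = 0.

Definition central_normal (q : R -> vec) (s : R) : vec :=
  vscal (/ lnorm (vD q s)) (vD q s).
Definition asymptotic_normal (q : R -> vec) (s : R) : vec :=
  vscal (/ lnorm (vD q s)) (lcross (vD q s) (q s)).

(** ds1/ds, s1 the arc length of the spherical image of q. *)
Definition ds1 (q : R -> vec) (s : R) : R := lnorm (vD q s).

Definition unit_nonnull_ruling (lo hi : Rbar) (q : R -> vec) : Prop :=
  forall s, in_I lo hi s -> Rabs (lor (q s) (q s)) = 1 /\ nonnull (vD q s).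

Definition striction (lo hi : Rbar) (c q : R -> vec) : Prop :=
  forall s, in_I lo hi s -> lor (vD q s) (vD c s) = 0.

Definition arc_length (lo hi : Rbar) (c : R -> vec) : Prop :=
  forall s, in_I lo hi s -> lnorm (vD c s) = 1.

Definition type_M1p (lo hi : Rbar) (q : R -> vec) : Prop :=
  forall s, in_I lo hi s -> spacelike (q s) /\ spacelike (central_normal q s).
Definition type_M2p (lo hi : Rbar) (q : R -> vec) : Prop :=
  forall s, in_I lo hi s -> timelike (central_normal q s) /\ spacelike (q s).

From Stdlib Require Import Reals Lra Psatz.
From Coquelicot Require Import Coquelicot.
Open Scope R_scope.

(* Since phi is developable, c' = q, and with a' = (ds1/ds) kappa h the offset
   striction curve has tangent c*' = q + R (ds1/ds) kappa h.  The offset ruling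
   satisfies q*' = |q*'| a, and differentiating <q*, a> = 0 gives
   |q*'| = (ds1/ds) kappa sin theta > 0.  Hence a' never vanishes and the
   distribution parameter of phi_{h*} = c* + v a is 1 / ((ds1/ds) kappa).
   Next a* = a x q* = cos theta h - sin theta q has derivative
   (ds1/ds) kappa cos theta a, so the distribution parameter of phi_{a*}
   vanishes exactly where cos theta = 0 or cos theta + R (ds1/ds) kappa sin theta = 0.
   Finally cos theta cannot vanish on an open set: differentiating
   <q*, q> = cos theta would give (ds1/ds) sin theta = 0 there. *)

Lemma vec_ext (u v : vec) : x1 u = x1 v -> x2 u = x2 v -> x3 u = x3 v -> u = v.
Proof. destruct u, v; simpl; intros; subst; reflexivity. Qed.

Ltac vec_ring := apply vec_ext; unfold lor, det3, lcross, vadd, vscal; simpl; ring.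
Ltac lor_ring := unfold lor, det3, lcross, vadd, vscal; simpl; ring.

Lemma lor_sym x y : lor x y = lor y x.
Proof. lor_ring. Qed.
Lemma lor_scal_l k x y : lor (vscal k x) y = k * lor x y.
Proof. lor_ring. Qed.
Lemma lor_scal_r k x y : lor x (vscal k y) = k * lor x y.
Proof. lor_ring. Qed.
Lemma lor_add_l x y z : lor (vadd x y) z = lor x z + lor y z.
Proof. lor_ring. Qed.
Lemma lor_cross_l x y : lor (lcross x y) y = 0.
Proof. lor_ring. Qed.
Lemma lor_cross_r x y : lor (lcross x y) x = 0.
Proof. lor_ring. Qed.
Lemma lcross_scal_l k x y : lcross (vscal k x) y = vscal k (lcross x y).
Proof. vec_ring. Qed.
Lemma lcross_anti x y : lcross y x = vscal (-1) (lcross x y).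
Proof. vec_ring. Qed.
Lemma lcross_lcross x y z :
  lcross (lcross x y) z = vadd (vscal (lor y z) x) (vscal (- lor x z) y).
Proof. vec_ring. Qed.
Lemma lor_lcross x y z w :
  lor (lcross x y) (lcross z w) = lor x w * lor y z - lor x z * lor y w.
Proof. lor_ring. Qed.
Lemma det3_lcross x y z : det3 x y z = - lor (lcross x y) z.
Proof. lor_ring. Qed.

(* Cramer's rule in Lorentzian form. *)
Lemma det3_expansion x y z v :
  vscal (det3 x y z) v =
  vadd (vadd (vscal (- lor v (lcross y z)) x) (vscal (- lor v (lcross z x)) y))
       (vscal (- lor v (lcross x y)) z).
Proof. vec_ring. Qed.

Section LorentzFrame.

Variables Q H : vec.
Hypotheses (HQ : lor Q Q = 1) (HH : lor H H = 1) (HQH : lor Q H = 0).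

Lemma frame_normal_unit : lor (lcross H Q) (lcross H Q) = -1.
Proof. rewrite lor_lcross, (lor_sym H Q), HQ, HH, HQH; ring. Qed.

Lemma frame_cross_normal_Q : lcross (lcross H Q) Q = H.
Proof. rewrite lcross_lcross, HQ, (lor_sym H Q), HQH; vec_ring. Qed.

Lemma frame_cross_normal_H : lcross (lcross H Q) H = vscal (-1) Q.
Proof. rewrite lcross_lcross, HQH, HH; vec_ring. Qed.

Lemma frame_det : det3 Q H (lcross H Q) = -1.
Proof.
  rewrite det3_lcross, lcross_anti, lor_scal_l, frame_normal_unit; ring.
Qed.

Lemma frame_expansion v :
  v = vadd (vadd (vscal (lor v Q) Q) (vscal (lor v H) H))
           (vscal (- lor v (lcross H Q)) (lcross H Q)).
Proof.
  pose proof (det3_expansion Q H (lcross H Q) v) as E.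
  rewrite frame_det, frame_cross_normal_Q, (lcross_anti (lcross H Q) H),
    frame_cross_normal_H, (lcross_anti H Q) in E.
  apply vec_ext; [apply (f_equal x1) in E | apply (f_equal x2) in E
                 | apply (f_equal x3) in E];
  unfold lor in E |- *; simpl in E |- *; lra.
Qed.

End LorentzFrame.

Lemma lnorm_pos x : nonnull x -> 0 < lnorm x.
Proof. intros Hx; apply sqrt_lt_R0, Rabs_pos_lt, Hx. Qed.

Lemma lor_normalize x :
  nonnull x -> lor (vscal (/ lnorm x) x) (vscal (/ lnorm x) x) = lor x x / Rabs (lor x x).
Proof.
  intros Hx.
  rewrite lor_scal_l, lor_scal_r, <- Rmult_assoc, <- Rinv_mult.
  unfold lnorm; rewrite sqrt_sqrt by apply Rabs_pos.
  unfold Rdiv; ring.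
Qed.

Lemma Rdiv_Rabs_eq1 r : r <> 0 -> 0 < r / Rabs r -> r / Rabs r = 1.
Proof.
  intros Hr Hpos; destruct (Rle_or_lt 0 r) as [Hr0 | Hr0].
  - rewrite Rabs_pos_eq by exact Hr0; field; exact Hr.
  - rewrite Rabs_left in Hpos by exact Hr0.
    replace (r / - r) with (-1) in Hpos by (field; exact Hr); lra.
Qed.

Lemma Rdiv_eq0 x y : y <> 0 -> x / y = 0 -> x = 0.
Proof.
  intros Hy E; apply (Rmult_eq_reg_r (/ y)); [rewrite Rmult_0_l; exact E |].
  apply Rinv_neq_0_compat, Hy.
Qed.

(* The case p = 0 holds only because Rocq's division gives x / 0 = 0. *)
Lemma Rdiv_mul_sqr_eq0 p x : p * x / (p * p) = 0 <-> p = 0 \/ x = 0.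
Proof.
  destruct (Req_dec p 0) as [-> | Hp].
  - split; [left; reflexivity | intros _; unfold Rdiv; ring].
  - replace (p * x / (p * p)) with (x / p) by (field; exact Hp).
    split; [intros E; right; exact (Rdiv_eq0 _ _ Hp E) |].
    intros [E | ->]; [contradiction | unfold Rdiv; ring].
Qed.

Lemma lor_unit_spacelike x : Rabs (lor x x) = 1 -> spacelike x -> lor x x = 1.
Proof. unfold spacelike; intros H1 H2; rewrite Rabs_pos_eq in H1; lra. Qed.

Definition vder (f : R -> vec) (s : R) (v : vec) : Prop :=
  is_derive (fun t => x1 (f t)) s (x1 v) /\ is_derive (fun t => x2 (f t)) s (x2 v) /\
  is_derive (fun t => x3 (f t)) s (x3 v).

Lemma vder_vD f s : vdiff_at f s -> vder f s (vD f s).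
Proof. intros [H1 [H2 H3]]; repeat split; apply Derive_correct; assumption. Qed.

Lemma vD_vder f s v : vder f s v -> vD f s = v.
Proof. intros [H1 [H2 H3]]; apply vec_ext; apply is_derive_unique; assumption. Qed.

Lemma vdiff_at_vder f s v : vder f s v -> vdiff_at f s.
Proof. intros [H1 [H2 H3]]; repeat split; eexists; eassumption. Qed.

Lemma vder_ext_loc f g s v :
  locally s (fun t => f t = g t) -> vder f s v -> vder g s v.
Proof.
  intros Hfg [H1 [H2 H3]]; repeat split;
  (eapply is_derive_ext_loc; [| eassumption]);
  (eapply filter_imp; [| exact Hfg]); intros t ->; reflexivity.
Qed.

Lemma is_derive_Rmult (f g : R -> R) s df dg :
  is_derive f s df -> is_derive g s dg ->
  is_derive (fun t => f t * g t) s (df * g s + f s * dg).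
Proof. intros Hf Hg; apply (is_derive_mult f g); auto; intros; apply Rmult_comm. Qed.

Lemma is_derive_eq (f : R -> R) s d d' : is_derive f s d -> d = d' -> is_derive f s d'.
Proof. intros Hf <-; exact Hf. Qed.

Ltac derive_step :=
  match goal with
  | |- is_derive (fun t => @?f t + @?g t) _ _ => apply (is_derive_plus f g)
  | |- is_derive (fun t => @?f t - @?g t) _ _ => apply (is_derive_minus f g)
  | |- is_derive (fun t => @?f t * @?g t) _ _ => apply (is_derive_Rmult f g)
  | |- is_derive (fun t => - @?f t) _ _ => apply (is_derive_opp f)
  end.

Ltac derive_poly :=
  eapply is_derive_eq; [repeat derive_step; eassumption | cbn; ring].

Lemma is_derive_lor f g s u w : vder f s u -> vder g s w ->
  is_derive (fun t => lor (f t) (g t)) s (lor u (g s) + lor (f s) w).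
Proof. intros [F1 [F2 F3]] [G1 [G2 G3]]; unfold lor; derive_poly. Qed.

Lemma vder_lcross f g s u w : vder f s u -> vder g s w ->
  vder (fun t => lcross (f t) (g t)) s (vadd (lcross u (g s)) (lcross (f s) w)).
Proof. intros [F1 [F2 F3]] [G1 [G2 G3]]; split; [|split]; simpl; derive_poly. Qed.

Lemma vder_vscal (k : R -> R) f s dk u : is_derive k s dk -> vder f s u ->
  vder (fun t => vscal (k t) (f t)) s (vadd (vscal dk (f s)) (vscal (k s) u)).
Proof. intros Hk [F1 [F2 F3]]; split; [|split]; simpl; derive_poly. Qed.

Lemma vder_vadd f g s u w : vder f s u -> vder g s w ->
  vder (fun t => vadd (f t) (g t)) s (vadd u w).
Proof. intros [F1 [F2 F3]] [G1 [G2 G3]]; split; [|split]; simpl; derive_poly. Qed.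

Lemma lor_locally_const f g s u w k : vder f s u -> vder g s w ->
  locally s (fun t => lor (f t) (g t) = k) -> lor u (g s) + lor (f s) w = 0.
Proof.
  intros Hf Hg Hk.
  rewrite <- (is_derive_unique _ _ _ (is_derive_lor f g s u w Hf Hg)).
  apply is_derive_unique, (is_derive_ext_loc (fun _ => k)); [| exact (is_derive_const k s)].
  eapply filter_imp; [| exact Hk]; intros t Ht; symmetry; exact Ht.
Qed.

Lemma in_I_locally lo hi s : in_I lo hi s -> locally s (in_I lo hi).
Proof. intros Hs; exact (open_and _ _ (open_Rbar_gt lo) (open_Rbar_lt hi) s Hs). Qed.

Lemma in_I_nonempty lo hi : Rbar_lt lo hi -> exists s, in_I lo hi s.
Proof.
  unfold in_I; destruct lo as [l | |], hi as [h | |]; simpl; intros H; try contradiction.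
  - exists ((l + h) / 2); simpl; lra.
  - exists (l + 1); simpl; lra.
  - exists (h - 1); simpl; lra.
  - exists 0; simpl; auto.
Qed.

Lemma vD_central_normal f s :
  nonnull (vD f s) -> vD f s = vscal (ds1 f s) (central_normal f s).
Proof.
  intros Hf; pose proof (lnorm_pos _ Hf) as Hpos.
  unfold central_normal, ds1; apply vec_ext; simpl; field; lra.
Qed.

Lemma asymptotic_normal_cross f s :
  asymptotic_normal f s = lcross (central_normal f s) (f s).
Proof. unfold asymptotic_normal, central_normal; rewrite lcross_scal_l; reflexivity. Qed.

Lemma central_normal_unit f s : nonnull (vD f s) ->
  spacelike (central_normal f s) -> lor (central_normal f s) (central_normal f s) = 1.
Proof.
  unfold spacelike, central_normal; intros Hf; rewrite lor_normalize by exact Hf.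
  apply Rdiv_Rabs_eq1, Hf.
Qed.

Lemma vdiff_at_central_normal f s :
  vdiff_at (vD f) s -> nonnull (vD f s) -> vdiff_at (central_normal f) s.
Proof.
  intros Hdf Hf; pose proof (vder_vD _ _ Hdf) as D.
  assert (Hinv : ex_derive (fun t => / lnorm (vD f t)) s).
  { eexists; apply is_derive_inv.
    - apply is_derive_sqrt; [apply is_derive_Rabs |].
      + exact (is_derive_lor _ _ _ _ _ D D).
      + exact Hf.
      + apply Rabs_pos_lt, Hf.
    - apply Rgt_not_eq, lnorm_pos, Hf. }
  destruct Hinv as [dk Hk]; exact (vdiff_at_vder _ _ _ (vder_vscal _ _ _ _ _ Hk D)).
Qed.

Section MannheimOffset.

Variables (lo hi : Rbar) (c q qstar : R -> vec) (kappa theta : R -> R) (Rc : R).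
Hypothesis Hlohi : Rbar_lt lo hi.
Hypothesis Hc : forall s, in_I lo hi s -> vdiff_at c s.
Hypotheses (Hq2 : C2_on lo hi q) (Hqu : unit_nonnull_ruling lo hi q)
  (HM1 : type_M1p lo hi q).
Hypotheses (Hstr : striction lo hi c q) (Harc : arc_length lo hi c)
  (Hcq : forall s, in_I lo hi s -> 0 < lor (vD c s) (q s))
  (Hdev : developable_on lo hi c q).
Hypothesis Hkap : forall s, in_I lo hi s ->
  vD (central_normal q) s =
  vscal (ds1 q s) (vadd (vscal (-1) (q s)) (vscal (kappa s) (asymptotic_normal q s))).
Hypotheses (Hqs2 : C2_on lo hi qstar) (Hqsu : unit_nonnull_ruling lo hi qstar)
  (Hmann : forall s, in_I lo hi s -> central_normal qstar s = asymptotic_normal q s)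
  (Hth : forall s, in_I lo hi s ->
     qstar s = vadd (vscal (cos (theta s)) (q s)) (vscal (sin (theta s)) (central_normal q s))).

Local Notation h := (central_normal q).
Local Notation a := (asymptotic_normal q).
Local Notation cstar := (fun s => vadd (c s) (vscal Rc (asymptotic_normal q s))).

Lemma M1_ruling_unit s : in_I lo hi s -> lor (q s) (q s) = 1.
Proof. intros Hs; exact (lor_unit_spacelike _ (proj1 (Hqu s Hs)) (proj1 (HM1 s Hs))). Qed.

Lemma M1_central_normal_unit s : in_I lo hi s -> lor (h s) (h s) = 1.
Proof. intros Hs; exact (central_normal_unit _ _ (proj2 (Hqu s Hs)) (proj2 (HM1 s Hs))). Qed.

Lemma M1_ruling_orth s : in_I lo hi s -> lor (q s) (h s) = 0.
Proof.
  intros Hs; pose proof (vder_vD _ _ (proj1 (Hq2 s Hs))) as D.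
  assert (Hconst : locally s (fun t => lor (q t) (q t) = 1)).
  { eapply filter_imp; [| apply (in_I_locally _ _ _ Hs)]; exact M1_ruling_unit. }
  pose proof (lor_locally_const q q s _ _ 1 D D Hconst) as E.
  rewrite (lor_sym (vD q s)), (vD_central_normal q s (proj2 (Hqu s Hs))), lor_scal_r in E.
  pose proof (lnorm_pos _ (proj2 (Hqu s Hs))) as Hpos; unfold ds1 in E; nra.
Qed.

Lemma M1_asymptotic_normal_unit s : in_I lo hi s -> lor (a s) (a s) = -1.
Proof.
  intros Hs; rewrite asymptotic_normal_cross.
  exact (frame_normal_unit _ _ (M1_ruling_unit s Hs) (M1_central_normal_unit s Hs)
           (M1_ruling_orth s Hs)).
Qed.

Lemma M1_normal_cross_ruling s : in_I lo hi s -> lcross (a s) (q s) = h s.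
Proof.
  intros Hs; rewrite asymptotic_normal_cross.
  exact (frame_cross_normal_Q _ _ (M1_ruling_unit s Hs) (M1_ruling_orth s Hs)).
Qed.

Lemma M1_normal_cross_central s : in_I lo hi s -> lcross (a s) (h s) = vscal (-1) (q s).
Proof.
  intros Hs; rewrite asymptotic_normal_cross.
  exact (frame_cross_normal_H _ _ (M1_central_normal_unit s Hs) (M1_ruling_orth s Hs)).
Qed.

Lemma M1_frame_det s : in_I lo hi s -> det3 (q s) (h s) (a s) = -1.
Proof.
  intros Hs; rewrite asymptotic_normal_cross.
  exact (frame_det _ _ (M1_ruling_unit s Hs) (M1_central_normal_unit s Hs) (M1_ruling_orth s Hs)).
Qed.

Lemma striction_tangent s : in_I lo hi s -> vD c s = q s.
Proof.
  intros Hs.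
  pose proof (M1_ruling_unit s Hs) as HQ; pose proof (M1_central_normal_unit s Hs) as HH.
  pose proof (M1_ruling_orth s Hs) as HQH.
  pose proof (lnorm_pos _ (proj2 (Hqu s Hs))) as HN.
  pose proof (vD_central_normal q s (proj2 (Hqu s Hs))) as Dq; unfold ds1 in Dq.
  assert (Hh : lor (vD c s) (h s) = 0).
  { pose proof (Hstr s Hs) as E; rewrite Dq, lor_scal_l, lor_sym in E; nra. }
  assert (Ha : lor (vD c s) (lcross (h s) (q s)) = 0).
  { pose proof (Rdiv_eq0 _ _ (proj2 (Hqu s Hs)) (Hdev s Hs)) as E.
    rewrite Dq in E.
    replace (det3 (vD c s) (q s) (vscal (lnorm (vD q s)) (h s)))
      with (lnorm (vD q s) * lor (vD c s) (lcross (h s) (q s))) in E by lor_ring.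
    nra. }
  assert (Hv : vD c s = vscal (lor (vD c s) (q s)) (q s)).
  { rewrite (frame_expansion _ _ HQ HH HQH (vD c s)) at 1; rewrite Hh, Ha; vec_ring. }
  assert (Hunit : Rabs (lor (vD c s) (vD c s)) = 1).
  { rewrite <- (sqrt_sqrt (Rabs _)) by apply Rabs_pos.
    fold (lnorm (vD c s)); rewrite (Harc s Hs); ring. }
  assert (Hk : 0 < lor (vD c s) (q s)) by exact (Hcq s Hs).
  set (k := lor (vD c s) (q s)) in Hv, Hk.
  rewrite Hv, lor_scal_l, lor_scal_r, HQ, Rabs_pos_eq in Hunit by nra.
  rewrite Hv; replace k with 1 by nra; vec_ring.
Qed.

Lemma asymptotic_normal_vder s :
  in_I lo hi s -> vder a s (vscal (ds1 q s * kappa s) (h s)).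
Proof.
  intros Hs.
  pose proof (vder_vD _ _ (vdiff_at_central_normal q s (proj2 (Hq2 s Hs)) (proj2 (Hqu s Hs))))
    as Dh.
  pose proof (vder_lcross _ _ _ _ _ Dh (vder_vD _ _ (proj1 (Hq2 s Hs)))) as D.
  eapply vder_ext_loc; [apply filter_forall; intros t; symmetry; apply asymptotic_normal_cross |].
  replace (vscal (ds1 q s * kappa s) (h s))
    with (vadd (lcross (vD h s) (q s)) (lcross (h s) (vD q s))); [exact D |].
  rewrite (Hkap s Hs), (vD_central_normal q s (proj2 (Hqu s Hs))),
    <- (M1_normal_cross_ruling s Hs).
  vec_ring.
Qed.

Lemma angle_cos s : in_I lo hi s -> lor (qstar s) (q s) = cos (theta s).
Proof.
  intros Hs; rewrite (Hth s Hs), lor_add_l, !lor_scal_l, (M1_ruling_unit s Hs),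
    (lor_sym (h s)), (M1_ruling_orth s Hs); ring.
Qed.

Lemma angle_sin s : in_I lo hi s -> lor (qstar s) (h s) = sin (theta s).
Proof.
  intros Hs; rewrite (Hth s Hs), lor_add_l, !lor_scal_l, (M1_central_normal_unit s Hs),
    (M1_ruling_orth s Hs); ring.
Qed.

Lemma offset_ruling_orth s : in_I lo hi s -> lor (qstar s) (a s) = 0.
Proof.
  intros Hs; rewrite (Hth s Hs), asymptotic_normal_cross, lor_add_l, !lor_scal_l,
    (lor_sym (q s)), (lor_sym (h s)), lor_cross_l, lor_cross_r; ring.
Qed.

Lemma offset_ruling_deriv s : in_I lo hi s -> vD qstar s = vscal (ds1 qstar s) (a s).
Proof. intros Hs; rewrite <- (Hmann s Hs); exact (vD_central_normal _ _ (proj2 (Hqsu s Hs))). Qed.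

Lemma ds1_offset s : in_I lo hi s -> ds1 qstar s = ds1 q s * kappa s * sin (theta s).
Proof.
  intros Hs.
  assert (Horth : locally s (fun t => lor (qstar t) (a t) = 0)).
  { eapply filter_imp; [| apply (in_I_locally _ _ _ Hs)]; exact offset_ruling_orth. }
  pose proof (lor_locally_const _ _ s _ _ 0 (vder_vD _ _ (proj1 (Hqs2 s Hs)))
    (asymptotic_normal_vder s Hs) Horth) as E.
  rewrite (offset_ruling_deriv s Hs), lor_scal_l, lor_scal_r, (M1_asymptotic_normal_unit s Hs),
    (angle_sin s Hs) in E.
  lra.
Qed.

Lemma ds1_offset_pos s : in_I lo hi s -> 0 < ds1 q s * kappa s * sin (theta s).
Proof. intros Hs; rewrite <- (ds1_offset s Hs); exact (lnorm_pos _ (proj2 (Hqsu s Hs))). Qed.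

Lemma ds1_kappa_neq0 s : in_I lo hi s -> ds1 q s * kappa s <> 0.
Proof. intros Hs Z; pose proof (ds1_offset_pos s Hs) as P; rewrite Z in P; lra. Qed.

Lemma ds1_sin_neq0 s : in_I lo hi s -> ds1 q s * sin (theta s) <> 0.
Proof.
  intros Hs Z; pose proof (ds1_offset_pos s Hs) as P.
  replace (ds1 q s * kappa s * sin (theta s)) with (ds1 q s * sin (theta s) * kappa s) in P
    by ring.
  rewrite Z in P; lra.
Qed.

Lemma offset_striction_deriv s : in_I lo hi s ->
  vD cstar s = vadd (q s) (vscal (Rc * (ds1 q s * kappa s)) (h s)).
Proof.
  intros Hs; apply vD_vder.
  pose proof (vder_vadd c (fun t => vscal Rc (a t)) s _ _ (vder_vD _ _ (Hc s Hs))
    (vder_vscal (fun _ => Rc) a s 0 _ (is_derive_const Rc s) (asymptotic_normal_vder s Hs)))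
    as D.
  rewrite (striction_tangent s Hs) in D.
  replace (vadd (q s) (vscal (Rc * (ds1 q s * kappa s)) (h s)))
    with (vadd (q s) (vadd (vscal 0 (a s)) (vscal Rc (vscal (ds1 q s * kappa s) (h s)))))
    by vec_ring.
  exact D.
Qed.

Lemma dist_param_offset_central s : in_I lo hi s ->
  dist_param cstar (central_normal qstar) s = / (ds1 q s * kappa s).
Proof.
  intros Hs.
  assert (Dh : vD (central_normal qstar) s = vscal (ds1 q s * kappa s) (h s)).
  { apply vD_vder; eapply vder_ext_loc; [| exact (asymptotic_normal_vder s Hs)].
    eapply filter_imp; [| apply (in_I_locally _ _ _ Hs)].
    intros t Ht; symmetry; exact (Hmann t Ht). }
  pose proof (ds1_kappa_neq0 s Hs) as Hm.
  unfold dist_param; rewrite Dh, (offset_striction_deriv s Hs), (Hmann s Hs),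
    lor_scal_l, lor_scal_r, (M1_central_normal_unit s Hs).
  set (m := ds1 q s * kappa s) in *.
  replace (det3 (vadd (q s) (vscal (Rc * m) (h s))) (a s) (vscal m (h s)))
    with (- m * det3 (q s) (h s) (a s)) by lor_ring.
  rewrite (M1_frame_det s Hs); field; exact Hm.
Qed.

Lemma offset_asymptotic_normal s : in_I lo hi s ->
  asymptotic_normal qstar s = vadd (vscal (cos (theta s)) (h s)) (vscal (- sin (theta s)) (q s)).
Proof.
  intros Hs; rewrite (asymptotic_normal_cross qstar), (Hmann s Hs), (Hth s Hs).
  transitivity (vadd (vscal (cos (theta s)) (lcross (a s) (q s)))
                     (vscal (sin (theta s)) (lcross (a s) (h s)))); [vec_ring |].
  rewrite (M1_normal_cross_ruling s Hs), (M1_normal_cross_central s Hs); vec_ring.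
Qed.

Lemma offset_asymptotic_normal_deriv s : in_I lo hi s ->
  vD (asymptotic_normal qstar) s = vscal (ds1 q s * kappa s * cos (theta s)) (a s).
Proof.
  intros Hs; apply vD_vder.
  assert (Hloc : locally s (fun t => lcross (a t) (qstar t) = asymptotic_normal qstar t)).
  { eapply filter_imp; [| apply (in_I_locally _ _ _ Hs)].
    intros t Ht; rewrite (asymptotic_normal_cross qstar t), (Hmann t Ht); reflexivity. }
  apply (vder_ext_loc _ _ _ _ Hloc).
  pose proof (vder_lcross _ _ _ _ _ (asymptotic_normal_vder s Hs)
    (vder_vD _ _ (proj1 (Hqs2 s Hs)))) as D.
  rewrite (offset_ruling_deriv s Hs), (Hth s Hs) in D.
  replace (vscal (ds1 q s * kappa s * cos (theta s)) (a s))
    with (vadd (lcross (vscal (ds1 q s * kappa s) (h s))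
                  (vadd (vscal (cos (theta s)) (q s)) (vscal (sin (theta s)) (h s))))
               (lcross (a s) (vscal (ds1 qstar s) (a s))));
    [exact D | rewrite asymptotic_normal_cross; vec_ring].
Qed.

Lemma dist_param_offset_asymptotic s : in_I lo hi s ->
  dist_param cstar (asymptotic_normal qstar) s =
  let p := ds1 q s * kappa s * cos (theta s) in
  p * (cos (theta s) + Rc * ds1 q s * kappa s * sin (theta s)) / (p * p).
Proof.
  intros Hs; unfold dist_param.
  rewrite (offset_striction_deriv s Hs), (offset_asymptotic_normal s Hs),
    (offset_asymptotic_normal_deriv s Hs), lor_scal_l, lor_scal_r,
    (M1_asymptotic_normal_unit s Hs).
  set (p := ds1 q s * kappa s * cos (theta s)); cbv zeta.
  replace (det3 (vadd (q s) (vscal (Rc * (ds1 q s * kappa s)) (h s)))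
            (vadd (vscal (cos (theta s)) (h s)) (vscal (- sin (theta s)) (q s)))
            (vscal p (a s)))
    with (p * (cos (theta s) + Rc * ds1 q s * kappa s * sin (theta s))
            * det3 (q s) (h s) (a s)) by lor_ring.
  rewrite (M1_frame_det s Hs).
  destruct (Req_dec p 0) as [-> | Hp]; [unfold Rdiv; ring | field; exact Hp].
Qed.

Lemma offset_asymptotic_developable_at s : in_I lo hi s ->
  dist_param cstar (asymptotic_normal qstar) s = 0 <->
  cos (theta s) = 0 \/ cos (theta s) + Rc * ds1 q s * kappa s * sin (theta s) = 0.
Proof.
  intros Hs; rewrite (dist_param_offset_asymptotic s Hs); cbv zeta.
  rewrite Rdiv_mul_sqr_eq0.
  pose proof (ds1_kappa_neq0 s Hs) as Hm.
  split; intros [E | E]; auto.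
  - left; apply Rmult_integral in E; destruct E; [contradiction | assumption].
  - left; rewrite E; ring.
Qed.

Lemma offset_condition_locally_nonzero s0 : in_I lo hi s0 ->
  cos (theta s0) + Rc * ds1 q s0 * kappa s0 * sin (theta s0) <> 0 ->
  locally s0 (fun t =>
    in_I lo hi t /\ cos (theta t) + Rc * ds1 q t * kappa t * sin (theta t) <> 0).
Proof.
  intros Hs0 HX.
  (* On the interval the condition agrees with Y, which is differentiable even
     though theta and kappa need not be continuous. *)
  set (Y := fun t => lor (qstar t) (q t) - Rc * lor (vD qstar t) (a t)).
  assert (HYX : forall t, in_I lo hi t ->
    Y t = cos (theta t) + Rc * ds1 q t * kappa t * sin (theta t)).
  { intros t Ht; unfold Y.
    rewrite (angle_cos t Ht), (offset_ruling_deriv t Ht), lor_scal_l,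
      (M1_asymptotic_normal_unit t Ht), (ds1_offset t Ht); ring. }
  assert (HYd : ex_derive Y s0).
  { eexists; unfold Y.
    apply (is_derive_minus (fun t => lor (qstar t) (q t))
                           (fun t => Rc * lor (vD qstar t) (a t))).
    - exact (is_derive_lor _ _ _ _ _ (vder_vD _ _ (proj1 (Hqs2 s0 Hs0)))
                                     (vder_vD _ _ (proj1 (Hq2 s0 Hs0)))).
    - apply is_derive_scal, is_derive_lor;
        [exact (vder_vD _ _ (proj2 (Hqs2 s0 Hs0))) | exact (asymptotic_normal_vder s0 Hs0)]. }
  assert (HY0 : Y s0 <> 0) by (rewrite (HYX s0 Hs0); exact HX).
  pose proof (ex_derive_continuous Y s0 HYd _ (open_neq 0 _ HY0)) as HYloc.
  eapply filter_imp; [| exact (filter_and _ _ (in_I_locally _ _ _ Hs0) HYloc)].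
  intros t [Ht HYt]; split; [exact Ht | rewrite <- (HYX t Ht); exact HYt].
Qed.

Lemma cos_angle_not_locally_zero s0 : in_I lo hi s0 ->
  ~ locally s0 (fun t => cos (theta t) = 0).
Proof.
  intros Hs0 Hcos.
  assert (Hloc : locally s0 (fun t => lor (qstar t) (q t) = 0)).
  { eapply filter_imp; [| exact (filter_and _ _ (in_I_locally _ _ _ Hs0) Hcos)].
    intros t [Ht Hct]; rewrite (angle_cos t Ht); exact Hct. }
  pose proof (lor_locally_const _ _ s0 _ _ 0 (vder_vD _ _ (proj1 (Hqs2 s0 Hs0)))
    (vder_vD _ _ (proj1 (Hq2 s0 Hs0))) Hloc) as E.
  rewrite (offset_ruling_deriv s0 Hs0), (vD_central_normal q s0 (proj2 (Hqu s0 Hs0))),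
    lor_scal_l, lor_scal_r, asymptotic_normal_cross, lor_cross_l, (angle_sin s0 Hs0) in E.
  apply (ds1_sin_neq0 s0 Hs0); lra.
Qed.

Lemma offset_central_nondevelopable : ~ developable_on lo hi cstar (central_normal qstar).
Proof.
  intros Hdev'; destruct (in_I_nonempty _ _ Hlohi) as [s Hs].
  pose proof (Hdev' s Hs) as E; rewrite (dist_param_offset_central s Hs) in E.
  exact (Rinv_neq_0_compat _ (ds1_kappa_neq0 s Hs) E).
Qed.

Lemma offset_asymptotic_developable_iff :
  developable_on lo hi cstar (asymptotic_normal qstar) <->
  forall s, in_I lo hi s -> cos (theta s) + Rc * ds1 q s * kappa s * sin (theta s) = 0.
Proof.
  split.
  - intros Hd s0 Hs0.
    destruct (Req_dec (cos (theta s0) + Rc * ds1 q s0 * kappa s0 * sin (theta s0)) 0)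
      as [E | HX]; [exact E | exfalso].
    apply (cos_angle_not_locally_zero s0 Hs0).
    eapply filter_imp; [| exact (offset_condition_locally_nonzero s0 Hs0 HX)].
    intros t [Ht HXt].
    destruct (proj1 (offset_asymptotic_developable_at t Ht) (Hd t Ht)) as [E | E];
      [exact E | contradiction].
  - intros HX s Hs; apply (offset_asymptotic_developable_at s Hs); right; exact (HX s Hs).
Qed.

End MannheimOffset.

Theorem corollary6p4
  (lo hi : Rbar) (c q qstar : R -> vec) (kappa theta : R -> R) (Rc : R) :
  Rbar_lt lo hi ->
  (forall s, in_I lo hi s -> vdiff_at c s) ->
  C2_on lo hi q ->
  unit_nonnull_ruling lo hi q ->
  striction lo hi c q ->
  arc_length lo hi c ->
  (forall s, in_I lo hi s -> 0 < lor (vD c s) (q s)) ->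
  type_M1p lo hi q ->
  developable_on lo hi c q ->
  (forall s, in_I lo hi s ->
     vD (central_normal q) s =
     vscal (ds1 q s) (vadd (vscal (-1) (q s)) (vscal (kappa s) (asymptotic_normal q s)))) ->
  let cstar := fun s => vadd (c s) (vscal Rc (asymptotic_normal q s)) in
  C2_on lo hi qstar ->
  unit_nonnull_ruling lo hi qstar ->
  striction lo hi cstar qstar ->
  type_M2p lo hi qstar ->
  (forall s, in_I lo hi s -> central_normal qstar s = asymptotic_normal q s) ->
  (forall s, in_I lo hi s ->
     qstar s = vadd (vscal (cos (theta s)) (q s))
                    (vscal (sin (theta s)) (central_normal q s))) ->
  ~ developable_on lo hi cstar (central_normal qstar) /\
  (developable_on lo hi cstar (asymptotic_normal qstar) <->
   forall s, in_I lo hi s ->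
     cos (theta s) + Rc * ds1 q s * kappa s * sin (theta s) = 0).
Proof.
  intros Hlohi Hc Hq2 Hqu Hstr Harc Hcq HM1 Hdev Hkap cstar Hqs2 Hqsu _ _ Hmann Hth.
  split; [eapply offset_central_nondevelopable | eapply offset_asymptotic_developable_iff];
    eassumption.
Qed.
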